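(* Let $F$ be a safe sentence and let $\mathbf c$ be a nonempty finite set of object constants containing every object constant occurring in $F$. Then the equivalence $\mathrm{Ground}_{\mathbf c}[F]\leftrightarrow F$ is derivable from $\mathit{SPP}_{\mathbf c}$ in $\mathbf{INT}^=+\mathrm{DE}$.
   Context: Formulas are first-order formulas over a signature with object constants, predicate constants and equality, but no function constants of arity $>0$. The primitive connectives are $\bot,\land,\lor,\rightarrow$ and the quantifiers $\forall,\exists$; $\neg F$ abbreviates $F\rightarrow\bot$, $\top$ abbreviates $\bot\rightarrow\bot$, $F\leftrightarrow G$ abbreviates $(F\rightarrow G)\land(G\rightarrow F)$. A sentence is a formula without free variables. Restricted variables: for quantifier-free $G$, $\mathrm{RV}(G)$ is: $\emptyset$ if $G$ is an equality between two variables; the set of variables of $G$ if $G$ is any other atomic formula; $\mathrm{RV}(\bot)=\emptyset$; $\mathrm{RV}(G\land H)=\mathrm{RV}(G)\cup\mathrm{RV}(H)$; $\mathrm{RV}(G\lor H)=\mathrm{RV}(G)\cap\mathrm{RV}(H)$; $\mathrm{RV}(G\rightarrow H)=\emptyset$. An occurrence of a subformula or variable in a formula is positive if the number of implications containing it in their antecedent is even, negative otherwise, and strictly positive if it is in the antecedent of no implication. A prenex sentence $Q_1x_1\cdots Q_nx_nM$ ($M$ quantifier-free, $x_i$ distinct) is semi-safe if every strictly positive occurrence of every $x_i$ in $M$ belongs to a subformula $G\rightarrow H$ with $x_i\in\mathrm{RV}(G)$. Simplification transformations: $\neg\bot\mapsto\top$, $\neg\top\mapsto\bot$; $\bot\land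 G\mapsto\bot$, $G\land\bot\mapsto\bot$, $\top\land G\mapsto G$, $G\land\top\mapsto G$; $\bot\lor G\mapsto G$, $G\lor\bot\mapsto G$, $\top\lor G\mapsto\top$, $G\lor\top\mapsto\top$; $\bot\rightarrow G\mapsto\top$, $G\rightarrow\top\mapsto\top$, $\top\rightarrow G\mapsto G$. A variable $x$ is positively (resp. negatively) weakly restricted in a quantifier-free formula $G$ if the formula obtained from $G$ by first replacing every atomic formula $A$ of $G$ with $x\in\mathrm{RV}(A)$ by $\bot$ and then applying the simplification transformations is $\top$ (resp. $\bot$). A semi-safe prenex sentence $Q_1x_1\cdots Q_nx_nM$ is safe if for every occurrence of every variable $x_i$: (a) if $Q_i=\forall$, the occurrence belongs to a positive subformula (of the sentence) in which $x_i$ is positively weakly restricted, or to a negative subformula in which $x_i$ is negatively weakly restricted; (b) if $Q_i=\exists$, the occurrence belongs to a negative subformula in which $x_i$ is positively weakly restricted, or to a positive subformula in which $x_i$ is negatively weakly restricted. For a finite set $\mathbf c$ of object constants, $\mathit{in}_{\mathbf c}(x_1,\dots,x_m)$ is $\bigwedge_{1\le j\le m}\bigvee_{c\in\mathbf c}x_j=c$, and $\mathit{SPP}_{\mathbf c}$ is the conjunction of $\forall\mathbf x(p_i(\mathbf x)\rightarrow\mathit{in}_{\mathbf c}(\mathbf x))$ over all predicate constants $p_i$ occurring in $F$. For a prenex sentence $F$ and nonempty finite $\mathbf c$, $\mathrm{Ground}_{\mathbf c}[F]$ is: $F$ if $F$ is quantifier-free; $\mathrm{Ground}_{\mathbf c}[\forall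 xG(x)]=\bigwedge_{c\in\mathbf c}\mathrm{Ground}_{\mathbf c}[G(c)]$; $\mathrm{Ground}_{\mathbf c}[\exists xG(x)]=\bigvee_{c\in\mathbf c}\mathrm{Ground}_{\mathbf c}[G(c)]$. $\mathbf{INT}^=$ is intuitionistic predicate logic with equality, and $\mathrm{DE}$ is the decidable equality axiom $x=y\lor x\neq y$. *)

From Stdlib Require Import List Arith Bool.
Import ListNotations.

(* A predicate constant is a pair (name, arity); an atom p(t1..tn) uses the
   predicate constant (p, n). *)
Inductive term : Type :=
| TVar (x : nat)
| TConst (c : nat).

Inductive form : Type :=
| FBot
| FPred (p : nat) (ts : list term)
| FEq (s t : term)
| FAnd (A B : form)
| FOr (A B : form)
| FImp (A B : form)
| FAll (x : nat) (A : form)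
| FEx (x : nat) (A : form).

Definition FNeg (A : form) : form := FImp A FBot.
Definition FTop : form := FImp FBot FBot.
Definition FIff (A B : form) : form := FAnd (FImp A B) (FImp B A).

Fixpoint bigAnd (l : list form) : form :=
  match l with
  | [] => FTop
  | [A] => A
  | A :: l' => FAnd A (bigAnd l')
  end.

Fixpoint bigOr (l : list form) : form :=
  match l with
  | [] => FBot
  | [A] => A
  | A :: l' => FOr A (bigOr l')
  end.

Definition term_has (x : nat) (t : term) : bool :=
  match t with TVar y => Nat.eqb x y | TConst _ => false end.

(* x occurs (free or bound, but not counting binders) *)
Fixpoint occb (x : nat) (A : form) : bool :=
  match A with
  | FBot => false
  | FPred _ ts => existsb (term_has x) ts
  | FEq s t => term_has x s || term_has x t
  | FAnd B C | FOr B C | FImp B C => occb x B || occb x C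
  | FAll _ B | FEx _ B => occb x B
  end.

Fixpoint freeb (x : nat) (A : form) : bool :=
  match A with
  | FBot => false
  | FPred _ ts => existsb (term_has x) ts
  | FEq s t => term_has x s || term_has x t
  | FAnd B C | FOr B C | FImp B C => freeb x B || freeb x C
  | FAll y B | FEx y B => negb (Nat.eqb x y) && freeb x B
  end.

Definition sentence (A : form) : Prop := forall x, freeb x A = false.

Fixpoint qf (A : form) : Prop :=
  match A with
  | FBot | FPred _ _ | FEq _ _ => True
  | FAnd B C | FOr B C | FImp B C => qf B /\ qf C
  | FAll _ _ | FEx _ _ => False
  end.

Definition term_consts (t : term) : list nat :=
  match t with TVar _ => [] | TConst c => [c] end.

Fixpoint consts (A : form) : list nat :=
  match A with
  | FBot => []
  | FPred _ ts => flat_map term_consts ts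
  | FEq s t => term_consts s ++ term_consts t
  | FAnd B C | FOr B C | FImp B C => consts B ++ consts C
  | FAll _ B | FEx _ B => consts B
  end.

Fixpoint preds (A : form) : list (nat * nat) :=
  match A with
  | FBot | FEq _ _ => []
  | FPred p ts => [(p, length ts)]
  | FAnd B C | FOr B C | FImp B C => preds B ++ preds C
  | FAll _ B | FEx _ B => preds B
  end.

(* ---------- Substitution (no renaming; used with side conditions) ------- *)
Definition subst_term (x : nat) (u : term) (t : term) : term :=
  match t with
  | TVar y => if Nat.eqb y x then u else t
  | TConst _ => t
  end.

Fixpoint subst (x : nat) (u : term) (A : form) : form :=
  match A with
  | FBot => FBot
  | FPred p ts => FPred p (map (subst_term x u) ts)
  | FEq s t => FEq (subst_term x u s) (subst_term x u t)
  | FAnd B C => FAnd (subst x u B) (subst x u C)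
  | FOr B C => FOr (subst x u B) (subst x u C)
  | FImp B C => FImp (subst x u B) (subst x u C)
  | FAll y B => if Nat.eqb y x then A else FAll y (subst x u B)
  | FEx y B => if Nat.eqb y x then A else FEx y (subst x u B)
  end.

Fixpoint substitutable (u : term) (x : nat) (A : form) : Prop :=
  match A with
  | FBot | FPred _ _ | FEq _ _ => True
  | FAnd B C | FOr B C | FImp B C =>
      substitutable u x B /\ substitutable u x C
  | FAll y B | FEx y B =>
      freeb x A = false \/ (term_has y u = false /\ substitutable u x B)
  end.

Inductive prv : list form -> form -> Prop :=
| prv_ax G A : In A G -> prv G A
| prv_botE G A : prv G FBot -> prv G A
| prv_andI G A B : prv G A -> prv G B -> prv G (FAnd A B)
| prv_andE1 G A B : prv G (FAnd A B) -> prv G A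
| prv_andE2 G A B : prv G (FAnd A B) -> prv G B
| prv_orI1 G A B : prv G A -> prv G (FOr A B)
| prv_orI2 G A B : prv G B -> prv G (FOr A B)
| prv_orE G A B C :
    prv G (FOr A B) -> prv (A :: G) C -> prv (B :: G) C -> prv G C
| prv_impI G A B : prv (A :: G) B -> prv G (FImp A B)
| prv_impE G A B : prv G (FImp A B) -> prv G A -> prv G B
| prv_allI G x A :
    (forall B, In B G -> freeb x B = false) -> prv G A -> prv G (FAll x A)
| prv_allE G x A u :
    substitutable u x A -> prv G (FAll x A) -> prv G (subst x u A)
| prv_exI G x A u :
    substitutable u x A -> prv G (subst x u A) -> prv G (FEx x A)
| prv_exE G x A C :
    (forall B, In B G -> freeb x B = false) -> freeb x C = false ->
    prv G (FEx x A) -> prv (A :: G) C -> prv G C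
| prv_eqrefl G t : prv G (FEq t t)
| prv_eqsubst G x A s t :
    substitutable s x A -> substitutable t x A ->
    prv G (FEq s t) -> prv G (subst x s A) -> prv G (subst x t A)
| prv_DE G s t : prv G (FOr (FEq s t) (FNeg (FEq s t))).

Inductive quant : Type := QAll | QEx.

Definition quantify (q : quant) (x : nat) (A : form) : form :=
  match q with QAll => FAll x A | QEx => FEx x A end.

Definition prenex (qs : list (quant * nat)) (M : form) : form :=
  fold_right (fun qx A => quantify (fst qx) (snd qx) A) M qs.

Fixpoint rvb (x : nat) (G : form) : bool :=
  match G with
  | FBot => false
  | FEq (TVar _) (TVar _) => false
  | FEq s t => term_has x s || term_has x t
  | FPred _ ts => existsb (term_has x) ts
  | FAnd A B => rvb x A || rvb x B
  | FOr A B => rvb x A && rvb x B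
  | FImp _ _ => false
  | FAll _ _ | FEx _ _ => false
  end.

(* Semi-safety for x in M: every strictly positive occurrence of x in M lies
   in a subformula G -> H of M with x in RV(G). *)
Fixpoint sp_covered (x : nat) (M : form) : Prop :=
  match M with
  | FBot => True
  | FPred _ _ | FEq _ _ => occb x M = false
  | FAnd A B | FOr A B => sp_covered x A /\ sp_covered x B
  | FImp A B => rvb x A = true \/ sp_covered x B
  | FAll _ _ | FEx _ _ => occb x M = false
  end.

Definition semi_safe (qs : list (quant * nat)) (M : form) : Prop :=
  forall q x, In (q, x) qs -> sp_covered x M.

Definition is_bot (A : form) : bool :=
  match A with FBot => true | _ => false end.
Definition is_top (A : form) : bool :=
  match A with FImp FBot FBot => true | _ => false end.

(* exhaustive application of the simplification transformations
   (computed bottom-up; the rewrite system is terminating and confluent) *)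
Fixpoint simp (A : form) : form :=
  match A with
  | FAnd B C =>
      let b := simp B in let c := simp C in
      if is_bot b || is_bot c then FBot
      else if is_top b then c else if is_top c then b else FAnd b c
  | FOr B C =>
      let b := simp B in let c := simp C in
      if is_top b || is_top c then FTop
      else if is_bot b then c else if is_bot c then b else FOr b c
  | FImp B C =>
      let b := simp B in let c := simp C in
      if is_bot b || is_top c then FTop
      else if is_top b then c else FImp b c
  | _ => A
  end.

Fixpoint kill (x : nat) (A : form) : form :=
  match A with
  | FPred _ _ | FEq _ _ => if rvb x A then FBot else A
  | FBot => FBot
  | FAnd B C => FAnd (kill x B) (kill x C)
  | FOr B C => FOr (kill x B) (kill x C)
  | FImp B C => FImp (kill x B) (kill x C)
  | FAll _ _ | FEx _ _ => A
  end.

Definition pos_weak (x : nat) (G : form) : Prop := simp (kill x G) = FTop.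
Definition neg_weak (x : nat) (G : form) : Prop := simp (kill x G) = FBot.

(* "good" subformula for variable x bound by q, at polarity pol
   (pol = true: positive) *)
Definition good (q : quant) (x : nat) (pol : bool) (G : form) : Prop :=
  match q, pol with
  | QAll, true => pos_weak x G
  | QAll, false => neg_weak x G
  | QEx, false => pos_weak x G
  | QEx, true => neg_weak x G
  end.

(* every occurrence of x in G belongs to a subformula of G which is good;
   pol is the polarity of G in the sentence *)
Fixpoint wcov (q : quant) (x : nat) (pol : bool) (G : form) : Prop :=
  good q x pol G \/
  match G with
  | FBot => True
  | FPred _ _ | FEq _ _ => occb x G = false
  | FAnd A B | FOr A B => wcov q x pol A /\ wcov q x pol B
  | FImp A B => wcov q x (negb pol) A /\ wcov q x pol B
  | FAll _ _ | FEx _ _ => occb x G = false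
  end.

Definition prenex_sentence (qs : list (quant * nat)) (M : form) : Prop :=
  qf M /\ NoDup (map snd qs) /\ sentence (prenex qs M).

Definition safe (qs : list (quant * nat)) (M : form) : Prop :=
  prenex_sentence qs M /\ semi_safe qs M /\
  (forall q x, In (q, x) qs -> wcov q x true M).

Fixpoint ground (cs : list nat) (qs : list (quant * nat)) (M : form) : form :=
  match qs with
  | [] => M
  | (QAll, x) :: qs' =>
      bigAnd (map (fun c => ground cs qs' (subst x (TConst c) M)) cs)
  | (QEx, x) :: qs' =>
      bigOr (map (fun c => ground cs qs' (subst x (TConst c) M)) cs)
  end.

Definition in_c (cs : list nat) (m : nat) : form :=
  bigAnd (map (fun j => bigOr (map (fun c => FEq (TVar j) (TConst c)) cs))
              (seq 0 m)).

Definition spp_one (cs : list nat) (pn : nat * nat) : form :=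
  let (p, n) := pn in
  fold_right (fun j A => FAll j A)
    (FImp (FPred p (map TVar (seq 0 n))) (in_c cs n)) (seq 0 n).

Definition SPP (cs : list nat) (F : form) : form :=
  bigAnd (map (spp_one cs) (preds F)).

From Stdlib Require Import List Arith Bool Lia.
Import ListNotations.

(* Induction on the quantifier prefix.  For the outermost quantifier Q x, DE
   splits on whether x equals some constant c of the universe.  If it does,
   the equality turns F(x) into the instance F(c) covered by the grounding.
   Otherwise SPP_c refutes every atom A with x in RV(A), and by safety each
   occurrence of x lies in a subformula that then collapses to T or _|_ with
   the right polarity; hence F(c0) implies F(x) when x is universal, and F(x)
   implies F(c0) when x is existential, for any c0 in the universe.

   Weakening is not a rule of the calculus (its admissibility would need
   renaming of eigenvariables), so lemmas needed in larger contexts quantify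
   over all suitable contexts. *)

Lemma prv_hd G A : prv (A :: G) A.
Proof. apply prv_ax; left; reflexivity. Qed.

Lemma prv_iff_refl G A : prv G (FIff A A).
Proof. apply prv_andI; apply prv_impI, prv_hd. Qed.

Lemma prv_bigAnd_intro G l : (forall A, In A l -> prv G A) -> prv G (bigAnd l).
Proof.
  induction l as [|A [|B l] IH]; intros H; simpl.
  - apply prv_impI, prv_hd.
  - apply H; left; reflexivity.
  - apply prv_andI; [apply H; left; reflexivity|].
    apply IH; intros C HC; apply H; right; exact HC.
Qed.

Lemma prv_bigAnd_elim G l A : In A l -> prv G (bigAnd l) -> prv G A.
Proof.
  induction l as [|A0 [|B l] IH]; intros Hin H; simpl in *.
  - contradiction.
  - destruct Hin as [<-|[]]; exact H.
  - destruct Hin as [<-|Hin].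
    + exact (prv_andE1 _ _ _ H).
    + exact (IH Hin (prv_andE2 _ _ _ H)).
Qed.

Lemma prv_bigOr_intro G l A : In A l -> prv G A -> prv G (bigOr l).
Proof.
  induction l as [|A0 [|B l] IH]; intros Hin H; simpl in *.
  - contradiction.
  - destruct Hin as [<-|[]]; exact H.
  - destruct Hin as [<-|Hin]; [apply prv_orI1 | apply prv_orI2, IH]; assumption.
Qed.

(* Eliminating [bigOr l] leaves the not yet analysed disjunctions of [l] in
   the context; as the calculus has no weakening rule, callers must know them. *)
Definition sub_disjunction (l : list form) (B : form) : Prop :=
  exists l', B = bigOr l' /\ incl l' l.

Lemma prv_bigOr_elim G l C : prv G (bigOr l) ->
  (forall A E, In A l -> Forall (sub_disjunction l) E -> prv (A :: E ++ G) C) ->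
  prv G C.
Proof.
  revert G; induction l as [|A0 [|B l] IH]; intros G H Hcase; simpl in H.
  - exact (prv_botE _ _ H).
  - apply prv_impE with A0; [apply prv_impI|exact H].
    apply (Hcase A0 []); [left; reflexivity | constructor].
  - apply (prv_orE _ _ _ _ H); [apply (Hcase A0 []); [left; reflexivity | constructor]|].
    apply IH; [apply prv_hd|]. intros A E HA HE.
    specialize (Hcase A (E ++ [bigOr (B :: l)])). rewrite <- app_assoc in Hcase.
    apply Hcase; [right; exact HA|]. apply Forall_app; split.
    + eapply Forall_impl; [|exact HE]. intros X [l' [-> Hl']].
      exists l'; split; [reflexivity | intros y Hy; right; apply Hl', Hy].
    + repeat constructor. exists (B :: l); split; [reflexivity | intros y Hy; right; exact Hy].
Qed.

Definition neq_const (x c : nat) : form := FNeg (FEq (TVar x) (TConst c)).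

Lemma prv_cases_const x C L G :
  (forall c E, In c L -> Forall (fun B => exists d, B = neq_const x d) E ->
     prv (FEq (TVar x) (TConst c) :: E ++ G) C) ->
  (forall E, Forall (fun B => exists d, B = neq_const x d) E ->
     (forall c, In c L -> In (neq_const x c) E) -> prv (E ++ G) C) ->
  prv G C.
Proof.
  revert G; induction L as [|c L IH]; intros G Heq Hneq.
  - apply (Hneq []); [constructor | intros _ []].
  - apply (prv_orE _ _ _ _ (prv_DE G (TVar x) (TConst c))).
    + apply (Heq c []); [left; reflexivity | constructor].
    + apply IH.
      * intros c' E Hc' HE. specialize (Heq c' (E ++ [neq_const x c])).
        rewrite <- app_assoc in Heq. apply Heq; [right; exact Hc'|].
        apply Forall_app; split; [exact HE | repeat constructor; exists c; reflexivity].
      * intros E HE Hin. specialize (Hneq (E ++ [neq_const x c])).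
        rewrite <- app_assoc in Hneq. apply Hneq.
        -- apply Forall_app; split; [exact HE | repeat constructor; exists c; reflexivity].
        -- intros c' [<-|Hc']; apply in_app_iff; [right; left | left; apply Hin]; auto.
Qed.

Definition max_var_term (t : term) : nat :=
  match t with TVar y => y | TConst _ => 0 end.

Fixpoint max_var (A : form) : nat :=
  match A with
  | FBot => 0
  | FPred _ ts => list_max (map max_var_term ts)
  | FEq s t => max (max_var_term s) (max_var_term t)
  | FAnd B C | FOr B C | FImp B C => max (max_var B) (max_var C)
  | FAll x B | FEx x B => max x (max_var B)
  end.

Lemma term_has_gt_max z t : max_var_term t < z -> term_has z t = false.
Proof. destruct t; simpl; intros; [apply Nat.eqb_neq; lia | reflexivity]. Qed.

Lemma freeb_gt_max z A : max_var A < z -> freeb z A = false.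
Proof.
  induction A as [| p ts | s t | | | | x A IH | x A IH]; simpl; intros H;
    rewrite ?IHA1, ?IHA2, ?IH by lia; auto using andb_false_r.
  - induction ts as [|t ts IHts]; simpl in *; [reflexivity|].
    rewrite term_has_gt_max, IHts by lia; reflexivity.
  - rewrite !term_has_gt_max by lia; reflexivity.
Qed.

(* Rewrite [s] to [t] inside [w = s], for a variable [w] not occurring in [s]. *)
Lemma prv_eq_sym G s t : prv G (FEq s t) -> prv G (FEq t s).
Proof.
  intros H.
  set (w := S (max_var_term s)).
  assert (Hw : forall u, subst_term w u s = s).
  { intros u; destruct s as [y|]; simpl; [|reflexivity].
    replace (y =? w) with false; [reflexivity|].
    symmetry; apply Nat.eqb_neq; unfold w; simpl; lia. }
  assert (E : forall u, subst w u (FEq (TVar w) s) = FEq u s)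
    by (intros u; simpl; rewrite Nat.eqb_refl, Hw; reflexivity).
  rewrite <- (E t). apply prv_eqsubst with s; [exact I | exact I | exact H |].
  rewrite E. apply prv_eqrefl.
Qed.

Lemma term_has_subst_const z x c t :
  term_has z (subst_term x (TConst c) t) = (negb (z =? x) && term_has z t).
Proof.
  destruct t as [y|d]; simpl; [|rewrite andb_false_r; reflexivity].
  destruct (y =? x) eqn:E; simpl.
  - apply Nat.eqb_eq in E; subst. destruct (z =? x); reflexivity.
  - destruct (z =? y) eqn:E'; [|rewrite andb_false_r; reflexivity].
    apply Nat.eqb_eq in E'; subst. rewrite E; reflexivity.
Qed.

Lemma freeb_subst_const z x c A :
  freeb z (subst x (TConst c) A) = (negb (z =? x) && freeb z A).
Proof.
  induction A as [| p ts | s t | A IHA B IHB | A IHA B IHB | A IHA B IHB | y A IH | y A IH];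
    simpl.
  4-6: rewrite IHA, IHB; destruct (z =? x); reflexivity.
  4-5: destruct (y =? x) eqn:E; simpl;
    [apply Nat.eqb_eq in E; subst; destruct (z =? x) | rewrite IH; destruct (z =? x), (z =? y)];
    reflexivity.
  - rewrite andb_false_r; reflexivity.
  - induction ts as [|t ts IHts]; simpl; [rewrite andb_false_r; reflexivity|].
    rewrite term_has_subst_const, IHts; destruct (z =? x); reflexivity.
  - rewrite !term_has_subst_const; destruct (z =? x); reflexivity.
Qed.

Lemma freeb_bigAnd z l :
  (forall A, In A l -> freeb z A = false) -> freeb z (bigAnd l) = false.
Proof.
  induction l as [|A [|B l] IH]; intros H; simpl in *; auto.
  rewrite H, IH by auto; reflexivity.
Qed.

Lemma freeb_bigOr z l :
  (forall A, In A l -> freeb z A = false) -> freeb z (bigOr l) = false.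
Proof.
  induction l as [|A [|B l] IH]; intros H; simpl in *; auto.
  rewrite H, IH by auto; reflexivity.
Qed.

Lemma freeb_ground cs qs A z : freeb z A = false \/ In z (map snd qs) ->
  freeb z (ground cs qs A) = false.
Proof.
  revert A; induction qs as [|[q x] qs IH]; intros A H; simpl in *.
  - destruct H as [H|[]]; exact H.
  - destruct q; [apply freeb_bigAnd | apply freeb_bigOr]; intros B HB;
      apply in_map_iff in HB as [c [<- _]]; apply IH;
      destruct H as [H|[<-|H]]; rewrite ?freeb_subst_const, ?H, ?Nat.eqb_refl;
      simpl; auto using andb_false_r.
Qed.

Lemma freeb_prenex z qs A : In z (map snd qs) -> freeb z (prenex qs A) = false.
Proof.
  induction qs as [|[[|] x] qs IH]; simpl; intros H; [contradiction| |];
    destruct H as [->|H]; rewrite ?Nat.eqb_refl, ?IH by assumption; auto using andb_false_r.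
Qed.

Lemma consts_prenex qs M : consts (prenex qs M) = consts M.
Proof. induction qs as [|[[|] x] qs IH]; simpl; auto. Qed.

Lemma preds_prenex qs M : preds (prenex qs M) = preds M.
Proof. induction qs as [|[[|] x] qs IH]; simpl; auto. Qed.

Lemma subst_id x A : subst x (TVar x) A = A.
Proof.
  assert (Ht : forall t, subst_term x (TVar x) t = t).
  { intros [y|d]; simpl; [destruct (y =? x) eqn:E; [apply Nat.eqb_eq in E; subst|]|]; auto. }
  induction A as [| p ts | s t | | | | y A IH | y A IH]; simpl;
    rewrite ?Ht, ?IHA1, ?IHA2; auto.
  - f_equal; induction ts as [|t ts IHts]; simpl; rewrite ?Ht, ?IHts; auto.
  - destruct (y =? x); rewrite ?IH; reflexivity.
  - destruct (y =? x); rewrite ?IH; reflexivity.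
Qed.

Lemma subst_prenex x u qs A : ~ In x (map snd qs) ->
  subst x u (prenex qs A) = prenex qs (subst x u A).
Proof.
  induction qs as [|[q y] qs IH]; intros H; simpl in *; [reflexivity|].
  destruct q; simpl; replace (y =? x) with false
    by (symmetry; apply Nat.eqb_neq; intuition); rewrite IH; auto.
Qed.

Lemma subst_not_occb x u A : occb x A = false -> subst x u A = A.
Proof.
  assert (Ht : forall t, term_has x t = false -> subst_term x u t = t).
  { intros [y|d] H; simpl in *; [rewrite Nat.eqb_sym, H|]; reflexivity. }
  induction A as [| p ts | s t | | | | y A IH | y A IH]; simpl; intros H;
    repeat match goal with K : (_ || _) = false |- _ => apply orb_false_iff in K as [] end;
    rewrite ?Ht, ?IHA1, ?IHA2, ?IH by assumption; auto.
  - f_equal; induction ts as [|t ts IHts]; simpl in *; [reflexivity|].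
    apply orb_false_iff in H as [H1 H2]; rewrite Ht, IHts; auto.
  - destruct (y =? x); reflexivity.
  - destruct (y =? x); reflexivity.
Qed.

Lemma occb_subst_const y x c A : y <> x ->
  occb y (subst x (TConst c) A) = occb y A.
Proof.
  intros Hyx.
  assert (Ht : forall t, term_has y (subst_term x (TConst c) t) = term_has y t).
  { intros t; rewrite term_has_subst_const.
    replace (y =? x) with false by (symmetry; apply Nat.eqb_neq; exact Hyx); reflexivity. }
  induction A as [| p ts | s t | | | | z A IH | z A IH]; simpl;
    rewrite ?Ht, ?IHA1, ?IHA2; auto.
  - induction ts as [|t ts IHts]; simpl; rewrite ?Ht, ?IHts; auto.
  - destruct (z =? x); simpl; auto.
  - destruct (z =? x); simpl; auto.
Qed.

Lemma qf_subst x u A : qf A -> qf (subst x u A).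
Proof. induction A; simpl; intuition. Qed.

Lemma preds_subst x u A : qf A -> preds (subst x u A) = preds A.
Proof.
  induction A; simpl; intros; intuition; rewrite ?length_map; f_equal; auto.
Qed.

Lemma consts_subst_const x c A a :
  In a (consts (subst x (TConst c) A)) -> In a (c :: consts A).
Proof.
  assert (Ht : forall t, In a (term_consts (subst_term x (TConst c) t)) ->
                         In a (c :: term_consts t))
    by (intros [y|d]; simpl; [destruct (y =? x)|]; simpl; tauto).
  induction A as [| p ts | s t | A1 IH1 A2 IH2 | A1 IH1 A2 IH2 | A1 IH1 A2 IH2 | y A IH | y A IH];
    simpl; rewrite ?in_app_iff.
  4-6: intros [H|H]; [apply IH1 in H | apply IH2 in H]; simpl in H; tauto.
  4-5: destruct (y =? x); simpl; auto.
  - tauto.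
  - induction ts as [|t ts IHts]; simpl; rewrite ?in_app_iff; [tauto|].
    intros [H|H]; [apply Ht in H | apply IHts in H]; simpl in H; tauto.
  - intros [H|H]; apply Ht in H; simpl in H; tauto.
Qed.

Lemma substitutable_qf u x A : qf A -> substitutable u x A.
Proof. induction A; simpl; intuition. Qed.

Lemma substitutable_const c x A : substitutable (TConst c) x A.
Proof. induction A; simpl; intuition. Qed.

Lemma substitutable_prenex u x qs A : qf A ->
  (forall z, In z (map snd qs) -> term_has z u = false) ->
  substitutable u x (prenex qs A).
Proof.
  intros HA; induction qs as [|[[|] y] qs IH]; intros H; simpl in *;
    [apply substitutable_qf; exact HA | |]; right; split; auto.
Qed.

Lemma is_bot_true A : is_bot A = true -> A = FBot.
Proof. destruct A; simpl; congruence. Qed.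

Lemma is_top_true A : is_top A = true -> A = FTop.
Proof.
  destruct A as [| | | | | [] B | |]; try discriminate.
  destruct B; try discriminate; reflexivity.
Qed.

Ltac simp_inversion B C :=
  simpl; destruct (is_bot (simp B)) eqn:E1, (is_bot (simp C)) eqn:E2,
    (is_top (simp B)) eqn:E3, (is_top (simp C)) eqn:E4; simpl; intros H;
  repeat match goal with
  | K : is_bot _ = true |- _ => apply is_bot_true in K
  | K : is_top _ = true |- _ => apply is_top_true in K
  end;
  try discriminate; try (injection H; intros; subst);
  repeat match goal with K : ?a = ?b |- _ => rewrite K in * end;
  simpl in *; try discriminate; tauto.

Lemma simp_and_top B C : simp (FAnd B C) = FTop -> simp B = FTop /\ simp C = FTop.
Proof. simp_inversion B C. Qed.
Lemma simp_and_bot B C : simp (FAnd B C) = FBot -> simp B = FBot \/ simp C = FBot.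
Proof. simp_inversion B C. Qed.
Lemma simp_or_top B C : simp (FOr B C) = FTop -> simp B = FTop \/ simp C = FTop.
Proof. simp_inversion B C. Qed.
Lemma simp_or_bot B C : simp (FOr B C) = FBot -> simp B = FBot /\ simp C = FBot.
Proof. simp_inversion B C. Qed.
Lemma simp_imp_top B C : simp (FImp B C) = FTop -> simp B = FBot \/ simp C = FTop.
Proof. simp_inversion B C. Qed.
Lemma simp_imp_bot B C : simp (FImp B C) = FBot -> simp B = FTop /\ simp C = FBot.
Proof. simp_inversion B C. Qed.

Fixpoint atom_instance (A B : form) : Prop :=
  match A, B with
  | FBot, FBot => True
  | FAnd A1 A2, FAnd B1 B2 | FOr A1 A2, FOr B1 B2 | FImp A1 A2, FImp B1 B2 =>
      atom_instance A1 B1 /\ atom_instance A2 B2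
  | (FPred _ _ | FEq _ _ | FAll _ _ | FEx _ _), _ => True
  | _, _ => False
  end.

(* Simplification only inspects the constants [FBot] and [FTop], so a
   constant outcome survives any replacement of atoms. *)
Lemma simp_atom_instance A B : atom_instance A B ->
  (simp A = FTop -> simp B = FTop) /\ (simp A = FBot -> simp B = FBot).
Proof.
  revert B; induction A as [| | | A1 IH1 A2 IH2 | A1 IH1 A2 IH2 | A1 IH1 A2 IH2 | |];
    intros B HB; destruct B as [| | | B1 B2 | B1 B2 | B1 B2 | |]; simpl in HB;
    try contradiction; try (split; intros H; discriminate).
  - split; intros H; exact H.
  - destruct HB as [HB1 HB2]; destruct (IH1 _ HB1) as [T1 F1], (IH2 _ HB2) as [T2 F2].
    split; intros H.
    + apply simp_and_top in H as [H1 H2]; simpl; rewrite T1, T2; auto.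
    + apply simp_and_bot in H as [H|H]; simpl; [rewrite F1 | rewrite F2, orb_true_r]; auto.
  - destruct HB as [HB1 HB2]; destruct (IH1 _ HB1) as [T1 F1], (IH2 _ HB2) as [T2 F2].
    split; intros H.
    + apply simp_or_top in H as [H|H]; simpl; [rewrite T1 | rewrite T2, orb_true_r]; auto.
    + apply simp_or_bot in H as [H1 H2]; simpl; rewrite F1, F2; auto.
  - destruct HB as [HB1 HB2]; destruct (IH1 _ HB1) as [T1 F1], (IH2 _ HB2) as [T2 F2].
    split; intros H.
    + apply simp_imp_top in H as [H|H]; simpl; [rewrite F1 | rewrite T2, orb_true_r]; auto.
    + apply simp_imp_bot in H as [H1 H2]; simpl; rewrite T1, F2; auto.
Qed.

Lemma rvb_subst_const y x c A : y <> x -> rvb y A = true ->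
  rvb y (subst x (TConst c) A) = true.
Proof.
  intros Hyx.
  assert (Ht : forall t, term_has y (subst_term x (TConst c) t) = term_has y t).
  { intros t; rewrite term_has_subst_const.
    replace (y =? x) with false by (symmetry; apply Nat.eqb_neq; exact Hyx); reflexivity. }
  induction A as [| p ts | [a|a] [b|b] | A1 IH1 A2 IH2 | A1 IH1 A2 IH2 | | |];
    simpl; intros H; try discriminate.
  - induction ts as [|t ts IHts]; simpl in *; [discriminate|].
    rewrite Ht; apply orb_true_iff in H as [H|H];
      [rewrite H | rewrite IHts by exact H; apply orb_true_r]; reflexivity.
  - destruct (a =? x) eqn:E; simpl; [|exact H].
    apply Nat.eqb_eq in E; rewrite orb_false_r in H; apply Nat.eqb_eq in H; congruence.
  - destruct (b =? x) eqn:E; simpl; [|exact H].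
    apply Nat.eqb_eq in E; apply Nat.eqb_eq in H; congruence.
  - apply orb_true_iff in H as [H|H]; rewrite ?IH1, ?IH2 by exact H; auto using orb_true_r.
  - apply andb_true_iff in H as [H1 H2]; rewrite IH1, IH2 by assumption; reflexivity.
Qed.

Lemma kill_subst_const y x c A : y <> x ->
  atom_instance (kill y A) (kill y (subst x (TConst c) A)).
Proof.
  intros Hyx; induction A as [| p ts | s t | | | | |]; try (simpl; auto; fail).
  all: match goal with |- atom_instance (kill _ ?A) _ =>
    change (atom_instance (if rvb y A then FBot else A)
      (if rvb y (subst x (TConst c) A) then FBot else subst x (TConst c) A));
    destruct (rvb y A) eqn:E; [rewrite (rvb_subst_const _ _ _ _ Hyx E)|]; exact I end.
Qed.

Lemma good_subst_const q y pol x c A : y <> x ->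
  good q y pol A -> good q y pol (subst x (TConst c) A).
Proof.
  intros Hyx; destruct q, pol; simpl; unfold pos_weak, neg_weak;
    apply (simp_atom_instance _ _ (kill_subst_const y x c A Hyx)).
Qed.

Lemma wcov_of_good q x pol A : good q x pol A -> wcov q x pol A.
Proof. destruct A; left; assumption. Qed.

Lemma wcov_subst_const q y pol x c A : y <> x ->
  wcov q y pol A -> wcov q y pol (subst x (TConst c) A).
Proof.
  intros Hyx; revert pol; induction A as [| | | | | | z A IH | z A IH];
    intros pol [Hg|Hw]; try (apply wcov_of_good, good_subst_const; assumption).
  all: try (rewrite <- (occb_subst_const y x c) in Hw by exact Hyx).
  all: simpl in *; try (destruct (z =? x)); right; try exact Hw.
  all: destruct Hw; split; auto.
Qed.

Definition forall_list (ys : list nat) (B : form) : form :=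
  fold_right (fun y A => FAll y A) B ys.

Definition spp_matrix (cs : list nat) (p n : nat) (tau : nat -> term) : form :=
  FImp (FPred p (map tau (seq 0 n)))
    (bigAnd (map (fun j => bigOr (map (fun c => FEq (tau j) (TConst c)) cs)) (seq 0 n))).

Lemma spp_one_forall_list cs p n :
  spp_one cs (p, n) = forall_list (seq 0 n) (spp_matrix cs p n TVar).
Proof. reflexivity. Qed.

Lemma qf_bigAnd l : Forall qf l -> qf (bigAnd l).
Proof. induction 1 as [|A [|B l] HA Hl IH]; simpl; auto. Qed.

Lemma qf_bigOr l : Forall qf l -> qf (bigOr l).
Proof. induction 1 as [|A [|B l] HA Hl IH]; simpl; auto. Qed.

Lemma qf_spp_matrix cs p n tau : qf (spp_matrix cs p n tau).
Proof.
  split; [exact I|]. apply qf_bigAnd, Forall_forall; intros A HA.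
  apply in_map_iff in HA as [j [<- _]].
  apply qf_bigOr, Forall_forall; intros B HB.
  apply in_map_iff in HB as [c [<- _]]; exact I.
Qed.

Lemma subst_bigAnd x u l : subst x u (bigAnd l) = bigAnd (map (subst x u) l).
Proof. induction l as [|A [|B l] IH]; simpl in *; rewrite ?IH; reflexivity. Qed.

Lemma subst_bigOr x u l : subst x u (bigOr l) = bigOr (map (subst x u) l).
Proof. induction l as [|A [|B l] IH]; simpl in *; rewrite ?IH; reflexivity. Qed.

Lemma subst_spp_matrix cs p n tau y u :
  subst y u (spp_matrix cs p n tau) = spp_matrix cs p n (fun j => subst_term y u (tau j)).
Proof.
  unfold spp_matrix; simpl; rewrite subst_bigAnd, !map_map; do 2 f_equal.
  apply map_ext; intros j; rewrite subst_bigOr, map_map; reflexivity.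
Qed.

Lemma spp_matrix_ext cs p n tau tau' : (forall j, j < n -> tau j = tau' j) ->
  spp_matrix cs p n tau = spp_matrix cs p n tau'.
Proof.
  intros H; unfold spp_matrix; f_equal; [f_equal|f_equal];
    apply map_ext_in; intros j Hj; apply in_seq in Hj; rewrite H by lia; reflexivity.
Qed.

Lemma subst_forall_list y u ys B : ~ In y ys ->
  subst y u (forall_list ys B) = forall_list ys (subst y u B).
Proof.
  induction ys as [|y' ys IH]; simpl; intros H; [reflexivity|].
  replace (y' =? y) with false by (symmetry; apply Nat.eqb_neq; intuition).
  rewrite IH; auto.
Qed.

Lemma substitutable_forall_list u y ys B : qf B ->
  (forall y', In y' ys -> term_has y' u = false) -> substitutable u y (forall_list ys B).
Proof.
  intros HB; induction ys as [|y' ys IH]; simpl; intros H;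
    [apply substitutable_qf, HB | right; auto].
Qed.

Lemma freeb_forall_list z ys B : In z ys \/ freeb z B = false ->
  freeb z (forall_list ys B) = false.
Proof.
  induction ys as [|y ys IH]; simpl; intros [H|H]; auto; try contradiction.
  - destruct H as [->|H]; [rewrite Nat.eqb_refl | rewrite IH]; auto using andb_false_r.
  - rewrite IH; auto using andb_false_r.
Qed.

Lemma prv_forall_list_intro G zs B :
  (forall z C, In z zs -> In C G -> freeb z C = false) ->
  prv G B -> prv G (forall_list zs B).
Proof.
  induction zs as [|z zs IH]; simpl; intros H HB; [exact HB|].
  apply prv_allI; [intros; apply H; auto | apply IH; auto].
Qed.

Fixpoint subst_seq (ys : list nat) (ts : list term) (t : term) : term :=
  match ys, ts with
  | y :: ys', u :: ts' => subst_seq ys' ts' (subst_term y u t)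
  | _, _ => t
  end.

Lemma prv_forall_list_elim cs p n G ys ts tau :
  length ys = length ts -> NoDup ys ->
  (forall t y, In t ts -> In y ys -> term_has y t = false) ->
  prv G (forall_list ys (spp_matrix cs p n tau)) ->
  prv G (spp_matrix cs p n (fun j => subst_seq ys ts (tau j))).
Proof.
  revert ts tau; induction ys as [|y ys IH]; intros [|u ts] tau Hl Hnd Ht H;
    simpl in *; try discriminate; [exact H|].
  inversion Hnd as [|? ? Hy Hys]; subst.
  apply prv_allE with (u := u) in H.
  - rewrite subst_forall_list, subst_spp_matrix in H by exact Hy.
    apply (IH ts (fun j => subst_term y u (tau j))); auto.
  - apply substitutable_forall_list; [apply qf_spp_matrix | intros; apply Ht; auto].
Qed.

Lemma subst_seq_not_in ys ts t :
  (forall y, In y ys -> term_has y t = false) -> subst_seq ys ts t = t.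
Proof.
  revert ts; induction ys as [|y ys IH]; intros [|u ts] H; simpl; auto.
  destruct t as [z|d]; simpl; [|apply IH; intros; apply H; simpl; auto].
  specialize (H y (or_introl eq_refl)) as Hy; simpl in Hy; rewrite Nat.eqb_sym, Hy.
  apply IH; intros; apply H; simpl; auto.
Qed.

Lemma subst_seq_nth ys ts i d d' : NoDup ys -> length ys = length ts ->
  (forall t y, In t ts -> In y ys -> term_has y t = false) -> i < length ys ->
  subst_seq ys ts (TVar (nth i ys d)) = nth i ts d'.
Proof.
  revert ts i; induction ys as [|y ys IH]; intros [|u ts] i Hnd Hl Ht Hi;
    simpl in *; try lia; inversion Hnd as [|? ? Hy Hys]; subst.
  destruct i as [|i]; simpl.
  - rewrite Nat.eqb_refl; apply subst_seq_not_in; intros; apply Ht; auto.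
  - replace (nth i ys d =? y) with false.
    + apply IH; auto; lia.
    + symmetry; apply Nat.eqb_neq; intros E; apply Hy; rewrite <- E; apply nth_In; lia.
Qed.

Lemma map_nth_seq_id (ts : list term) d :
  map (fun j => nth j ts d) (seq 0 (length ts)) = ts.
Proof.
  induction ts as [|t ts IH]; simpl; [reflexivity|].
  rewrite <- seq_shift, map_map; simpl; rewrite IH; reflexivity.
Qed.

Lemma prv_spp_matrix_inst cs p G k ts :
  (forall t y, In t ts -> In y (seq k (length ts)) -> term_has y t = false) ->
  prv G (forall_list (seq k (length ts)) (spp_matrix cs p (length ts) (fun j => TVar (k + j)))) ->
  prv G (spp_matrix cs p (length ts) (fun j => nth j ts (TVar 0))).
Proof.
  intros Hdisj H.
  apply prv_forall_list_elim with (ts := ts) in H; auto using seq_NoDup, length_seq.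
  rewrite (spp_matrix_ext _ _ _ _ (fun j => nth j ts (TVar 0))) in H; [exact H|].
  intros j Hj.
  rewrite <- (seq_nth k 0 Hj) at 1.
  apply subst_seq_nth; auto using seq_NoDup, length_seq; rewrite length_seq; exact Hj.
Qed.

(* The bound variables of [spp_one] are first renamed apart from [ts] and [G],
   so that instantiating them with [ts] cannot capture. *)
Lemma prv_spp_atom cs p ts G :
  prv G (spp_one cs (p, length ts)) -> prv G (FPred p ts) ->
  forall j, j < length ts ->
  prv G (bigOr (map (fun c => FEq (nth j ts (TVar 0)) (TConst c)) cs)).
Proof.
  intros H Hp j Hj.
  set (n := length ts) in *.
  set (bounds := n :: map max_var G ++ map max_var_term ts).
  set (N := S (list_max bounds)).
  assert (Hbound : forall m, In m bounds -> m < N).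
  { intros m Hm. pose proof (proj1 (list_max_le bounds _) (le_n _)) as Hle.
    rewrite Forall_forall in Hle; specialize (Hle m Hm); unfold N; lia. }
  assert (HnN : n < N) by (apply Hbound; left; reflexivity).
  set (fresh := map TVar (seq N n)).
  assert (Hn : length fresh = n) by (unfold fresh; rewrite length_map, length_seq; reflexivity).
  rewrite spp_one_forall_list, <- Hn in H.
  apply (prv_spp_matrix_inst cs p G 0 fresh) in H.
  2: { intros t y Ht Hy; apply in_map_iff in Ht as [z [<- Hz]].
       apply in_seq in Hz, Hy; rewrite Hn in Hy; simpl; apply Nat.eqb_neq; lia. }
  rewrite Hn, (spp_matrix_ext _ _ _ _ (fun j => TVar (N + j))) in H.
  2: { intros i Hi; unfold fresh; rewrite map_nth, seq_nth by exact Hi; reflexivity. }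
  apply (prv_forall_list_intro G (seq N n)) in H.
  2: { intros z C Hz HC; apply in_seq in Hz; apply freeb_gt_max.
       enough (max_var C < N) by lia. apply Hbound; right.
       apply in_app_iff; left; apply in_map, HC. }
  apply (prv_spp_matrix_inst cs p G N ts) in H.
  2: { intros t y Ht Hy; apply in_seq in Hy; apply term_has_gt_max.
       enough (max_var_term t < N) by lia. apply Hbound; right.
       apply in_app_iff; right; apply in_map, Ht. }
  unfold spp_matrix in H; rewrite map_nth_seq_id in H.
  refine (prv_bigAnd_elim _ _ _ _ (prv_impE _ _ _ H Hp)).
  apply in_map_iff; exists j; split; [reflexivity | apply in_seq; lia].
Qed.

Lemma freeb_SPP cs F z : freeb z (SPP cs F) = false.
Proof.
  apply freeb_bigAnd; intros A HA; apply in_map_iff in HA as [[p n] [<- _]].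
  rewrite spp_one_forall_list; apply freeb_forall_list.
  destruct (Nat.lt_ge_cases z n) as [Hz|Hz]; [left; apply in_seq; lia | right].
  simpl; apply orb_false_iff; split.
  - apply not_true_iff_false; intros Hex.
    apply existsb_exists in Hex as [t [Ht Hzt]]; apply in_map_iff in Ht as [j [<- Hj]].
    apply in_seq in Hj; simpl in Hzt; apply Nat.eqb_eq in Hzt; lia.
  - apply freeb_bigAnd; intros B HB; apply in_map_iff in HB as [j [<- Hj]].
    apply in_seq in Hj; apply freeb_bigOr; intros C HC.
    apply in_map_iff in HC as [c [<- _]]; simpl; rewrite orb_false_r.
    apply Nat.eqb_neq; lia.
Qed.

Section OutsideUniverse.

Variables (cs : list nat) (F0 : form).

Definition outside (x : nat) (G : list form) : Prop :=
  In (SPP cs F0) G /\ forall c, In c cs -> In (neq_const x c) G.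

Lemma outside_incl x G G' : outside x G -> incl G G' -> outside x G'.
Proof. intros [HS Hneq] HG; split; auto. Qed.

Lemma outside_cons x G A : outside x G -> outside x (A :: G).
Proof. intros H; apply (outside_incl _ _ _ H); intros B HB; right; exact HB. Qed.

Lemma prv_outside_eq x G d : outside x G -> In d cs ->
  prv G (FEq (TVar x) (TConst d)) -> prv G FBot.
Proof. intros [_ Hneq] Hd; apply prv_impE, prv_ax, Hneq, Hd. Qed.

Lemma prv_outside_pred x G p ts : outside x G -> In (p, length ts) (preds F0) ->
  rvb x (FPred p ts) = true -> prv G (FNeg (FPred p ts)).
Proof.
  intros Hout Hp Hx; apply prv_impI.
  set (G' := FPred p ts :: G).
  assert (Hspp : prv G' (spp_one cs (p, length ts)))
    by (apply (prv_bigAnd_elim _ (map (spp_one cs) (preds F0))); [apply in_map, Hp|];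
        apply prv_ax, (outside_cons _ _ _ Hout)).
  apply existsb_exists in Hx as [[y|d] [Hy Hxy]]; simpl in Hxy; [|discriminate].
  apply Nat.eqb_eq in Hxy; subst y.
  apply In_nth with (d := TVar 0) in Hy as [j [Hj Hjx]].
  pose proof (prv_spp_atom cs p ts G' Hspp (prv_hd _ _) j Hj) as Hor; rewrite Hjx in Hor.
  apply (prv_bigOr_elim _ _ _ Hor); intros A E HA _.
  apply in_map_iff in HA as [c [<- Hc]].
  apply (prv_outside_eq x _ c); [|exact Hc | apply prv_hd].
  apply (outside_incl _ _ _ Hout); intros B HB; right; apply in_app_iff; right; right; exact HB.
Qed.

Lemma prv_outside_eq_rv x G s t : outside x G -> incl (consts (FEq s t)) cs ->
  rvb x (FEq s t) = true -> prv G (FNeg (FEq s t)).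
Proof.
  intros Hout Hc Hx; apply prv_impI.
  destruct s as [y|d], t as [y'|d']; simpl in Hx; try discriminate.
  - rewrite orb_false_r in Hx; apply Nat.eqb_eq in Hx; subst y.
    apply (prv_outside_eq x _ d'); [apply outside_cons, Hout | apply Hc; left; reflexivity |].
    apply prv_hd.
  - apply Nat.eqb_eq in Hx; subst y'.
    apply (prv_outside_eq x _ d); [apply outside_cons, Hout | apply Hc; left; reflexivity |].
    apply prv_eq_sym, prv_hd.
Qed.

(* Every atom [A] with [x] in [RV(A)] is refutable outside the universe. *)
Lemma prv_weakly_restricted x X G :
  qf X -> incl (preds X) (preds F0) -> incl (consts X) cs -> outside x G ->
  (pos_weak x X -> prv G X) /\ (neg_weak x X -> prv G (FNeg X)).
Proof.
  unfold pos_weak, neg_weak; revert G.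
  induction X as [| p ts | s t | X1 IH1 X2 IH2 | X1 IH1 X2 IH2 | X1 IH1 X2 IH2 | |];
    intros G Hqf Hp Hc Hout; simpl in Hqf; try contradiction.
  - split; intros H; [discriminate | apply prv_impI, prv_hd].
  - change (kill x (FPred p ts)) with (if rvb x (FPred p ts) then FBot else FPred p ts).
    destruct (rvb x (FPred p ts)) eqn:E; split; intros H; try discriminate.
    apply (prv_outside_pred x); [exact Hout | apply Hp; left; reflexivity | exact E].
  - change (kill x (FEq s t)) with (if rvb x (FEq s t) then FBot else FEq s t).
    destruct (rvb x (FEq s t)) eqn:E; split; intros H; try discriminate.
    apply (prv_outside_eq_rv x); assumption.
  - destruct Hqf as [Q1 Q2]; apply incl_app_inv in Hp as [Hp1 Hp2];
      apply incl_app_inv in Hc as [Hc1 Hc2]; split; intros H.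
    + apply simp_and_top in H as [H1 H2].
      apply prv_andI; [apply (IH1 G) | apply (IH2 G)]; auto.
    + apply prv_impI; apply simp_and_bot in H as [H|H].
      * apply (prv_impE _ X1); [apply (IH1 _ Q1 Hp1 Hc1 (outside_cons _ _ _ Hout)), H|].
        apply (prv_andE1 _ _ X2), prv_hd.
      * apply (prv_impE _ X2); [apply (IH2 _ Q2 Hp2 Hc2 (outside_cons _ _ _ Hout)), H|].
        apply (prv_andE2 _ X1), prv_hd.
  - destruct Hqf as [Q1 Q2]; apply incl_app_inv in Hp as [Hp1 Hp2];
      apply incl_app_inv in Hc as [Hc1 Hc2]; split; intros H.
    + apply simp_or_top in H as [H|H];
        [apply prv_orI1, (IH1 G) | apply prv_orI2, (IH2 G)]; auto.
    + apply simp_or_bot in H as [H1 H2].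
      assert (Hout' : outside x (X1 :: FOr X1 X2 :: G) /\ outside x (X2 :: FOr X1 X2 :: G))
        by (split; do 2 apply outside_cons; exact Hout).
      apply prv_impI; apply (prv_orE _ X1 X2); [apply prv_hd| |].
      * apply (prv_impE _ X1); [apply (IH1 _ Q1 Hp1 Hc1 (proj1 Hout')), H1 | apply prv_hd].
      * apply (prv_impE _ X2); [apply (IH2 _ Q2 Hp2 Hc2 (proj2 Hout')), H2 | apply prv_hd].
  - destruct Hqf as [Q1 Q2]; apply incl_app_inv in Hp as [Hp1 Hp2];
      apply incl_app_inv in Hc as [Hc1 Hc2].
    pose proof (IH1 _ Q1 Hp1 Hc1 (outside_cons _ _ X1 Hout)) as [T1 F1].
    pose proof (IH2 _ Q2 Hp2 Hc2 (outside_cons _ _ X1 Hout)) as [T2 F2].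
    split; intros H.
    + apply prv_impI; apply simp_imp_top in H as [H|H]; [|apply T2, H].
      apply prv_botE, (prv_impE _ X1); [apply F1, H | apply prv_hd].
    + apply simp_imp_bot in H as [H1 H2].
      pose proof (IH1 _ Q1 Hp1 Hc1 (outside_cons _ _ (FImp X1 X2) Hout)) as [T1' _].
      pose proof (IH2 _ Q2 Hp2 Hc2 (outside_cons _ _ (FImp X1 X2) Hout)) as [_ F2'].
      apply prv_impI, (prv_impE _ X2); [apply F2', H2|].
      apply (prv_impE _ X1); [apply prv_hd | apply T1', H1].
Qed.

Definition imp_dir (d : bool) (A B : form) : form := if d then FImp A B else FImp B A.

(* The direction in which replacing a variable bound by [q] with a constant
   transfers truth, at a subformula of polarity [pol]. *)
Definition dir (q : quant) (pol : bool) : bool :=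
  match q with QAll => pol | QEx => negb pol end.

Lemma prv_imp_dir_refl d G A : prv G (imp_dir d A A).
Proof. destruct d; apply prv_impI, prv_hd. Qed.

Lemma prv_imp_dir_and d G A1 A2 B1 B2 :
  (forall G', incl G G' -> prv G' (imp_dir d A1 A2)) ->
  (forall G', incl G G' -> prv G' (imp_dir d B1 B2)) ->
  prv G (imp_dir d (FAnd A1 B1) (FAnd A2 B2)).
Proof.
  intros HA HB; assert (Hi : forall C, incl G (C :: G)) by (intros C B HB'; right; exact HB').
  destruct d; simpl in *; apply prv_impI, prv_andI.
  - apply (prv_impE _ A1); [apply HA, Hi | apply (prv_andE1 _ _ B1), prv_hd].
  - apply (prv_impE _ B1); [apply HB, Hi | apply (prv_andE2 _ A1), prv_hd].
  - apply (prv_impE _ A2); [apply HA, Hi | apply (prv_andE1 _ _ B2), prv_hd].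
  - apply (prv_impE _ B2); [apply HB, Hi | apply (prv_andE2 _ A2), prv_hd].
Qed.

Lemma prv_imp_dir_or d G A1 A2 B1 B2 :
  (forall G', incl G G' -> prv G' (imp_dir d A1 A2)) ->
  (forall G', incl G G' -> prv G' (imp_dir d B1 B2)) ->
  prv G (imp_dir d (FOr A1 B1) (FOr A2 B2)).
Proof.
  intros HA HB; assert (Hi : forall C D, incl G (C :: D :: G))
    by (intros C D B HB'; right; right; exact HB').
  destruct d; simpl in *; apply prv_impI; (eapply prv_orE; [apply prv_hd| |]).
  - apply prv_orI1, (prv_impE _ A1); [apply HA, Hi | apply prv_hd].
  - apply prv_orI2, (prv_impE _ B1); [apply HB, Hi | apply prv_hd].
  - apply prv_orI1, (prv_impE _ A2); [apply HA, Hi | apply prv_hd].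
  - apply prv_orI2, (prv_impE _ B2); [apply HB, Hi | apply prv_hd].
Qed.

Lemma prv_imp_dir_imp d G A1 A2 B1 B2 :
  (forall G', incl G G' -> prv G' (imp_dir (negb d) A1 A2)) ->
  (forall G', incl G G' -> prv G' (imp_dir d B1 B2)) ->
  prv G (imp_dir d (FImp A1 B1) (FImp A2 B2)).
Proof.
  intros HA HB; assert (Hi : forall C D, incl G (C :: D :: G))
    by (intros C D B HB'; right; right; exact HB').
  destruct d; simpl in *; apply prv_impI, prv_impI.
  - apply (prv_impE _ B1); [apply HB, Hi|].
    apply (prv_impE _ A1); [apply prv_ax; right; left; reflexivity|].
    apply (prv_impE _ A2); [apply HA, Hi | apply prv_hd].
  - apply (prv_impE _ B2); [apply HB, Hi|].
    apply (prv_impE _ A2); [apply prv_ax; right; left; reflexivity|].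
    apply (prv_impE _ A1); [apply HA, Hi | apply prv_hd].
Qed.

Lemma prv_good_transfer q x pol c0 X G :
  qf X -> incl (preds X) (preds F0) -> incl (consts X) cs -> outside x G ->
  good q x pol X -> prv G (imp_dir (dir q pol) (subst x (TConst c0) X) X).
Proof.
  intros Hq Hp Hc Hout Hg.
  pose proof (prv_weakly_restricted x X _ Hq Hp Hc (outside_cons _ _ (subst x (TConst c0) X) Hout))
    as [Hpos _].
  pose proof (prv_weakly_restricted x X _ Hq Hp Hc (outside_cons _ _ X Hout)) as [_ Hneg].
  destruct q, pol; simpl in *; apply prv_impI; auto;
    apply prv_botE, (prv_impE _ X); auto using prv_hd.
Qed.

Lemma prv_wcov_transfer q x pol c0 X G :
  qf X -> incl (preds X) (preds F0) -> incl (consts X) cs -> outside x G ->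
  wcov q x pol X -> prv G (imp_dir (dir q pol) (subst x (TConst c0) X) X).
Proof.
  revert pol G; induction X as [| | | X1 IH1 X2 IH2 | X1 IH1 X2 IH2 | X1 IH1 X2 IH2 | |];
    intros pol G Hq Hp Hc Hout [Hg|Hw]; try (apply prv_good_transfer; assumption);
    simpl in Hq; try contradiction.
  1: apply prv_imp_dir_refl.
  1-2: rewrite subst_not_occb by exact Hw; apply prv_imp_dir_refl.
  all: destruct Hq as [Q1 Q2], Hw as [W1 W2];
    apply incl_app_inv in Hp as [Hp1 Hp2]; apply incl_app_inv in Hc as [Hc1 Hc2].
  - apply prv_imp_dir_and; intros G' HG';
      [apply IH1 | apply IH2]; eauto using outside_incl.
  - apply prv_imp_dir_or; intros G' HG';
      [apply IH1 | apply IH2]; eauto using outside_incl.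
  - apply prv_imp_dir_imp; intros G' HG'; [|apply IH2; eauto using outside_incl].
    replace (negb (dir q pol)) with (dir q (negb pol)) by (destruct q; reflexivity).
    apply IH1; eauto using outside_incl.
Qed.

End OutsideUniverse.

Definition closed_for (zs : list nat) (A : form) : Prop :=
  forall z, In z zs -> freeb z A = false.

Lemma closed_for_bigAnd zs l : Forall (closed_for zs) l -> closed_for zs (bigAnd l).
Proof.
  rewrite Forall_forall; intros H z Hz; apply freeb_bigAnd; intros A HA; apply H; assumption.
Qed.

Lemma closed_for_bigOr zs l : Forall (closed_for zs) l -> closed_for zs (bigOr l).
Proof.
  rewrite Forall_forall; intros H z Hz; apply freeb_bigOr; intros A HA; apply H; assumption.
Qed.

Lemma closed_for_sub_disjunction zs l B :
  Forall (closed_for zs) l -> sub_disjunction l B -> closed_for zs B.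
Proof.
  intros Hl [l' [-> Hl']]; apply closed_for_bigOr, Forall_forall; intros A HA.
  rewrite Forall_forall in Hl; apply Hl, Hl', HA.
Qed.

Lemma closed_for_cons_inv x zs A : closed_for (x :: zs) A -> closed_for zs A.
Proof. intros H z Hz; apply H; right; exact Hz. Qed.

Lemma closed_ctx_freeb zs G z B :
  Forall (closed_for zs) G -> In z zs -> In B G -> freeb z B = false.
Proof. rewrite Forall_forall; intros H Hz HB; exact (H B HB z Hz). Qed.

Lemma closed_for_all x zs P : closed_for zs P -> closed_for (x :: zs) (FAll x P).
Proof.
  intros H z [<-|Hz]; simpl; [rewrite Nat.eqb_refl; reflexivity|].
  rewrite H by exact Hz; apply andb_false_r.
Qed.

Lemma closed_for_ex x zs P : closed_for zs P -> closed_for (x :: zs) (FEx x P).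
Proof. exact (closed_for_all x zs P). Qed.

Lemma closed_for_eq_const zs x c : ~ In x zs -> closed_for zs (FEq (TVar x) (TConst c)).
Proof.
  intros Hx z Hz; simpl; rewrite orb_false_r; apply Nat.eqb_neq; intros ->; contradiction.
Qed.

Lemma closed_for_neq_consts zs x E : ~ In x zs ->
  Forall (fun B => exists d, B = neq_const x d) E -> Forall (closed_for zs) E.
Proof.
  intros Hx; apply Forall_impl; intros B [d ->] z Hz; simpl; rewrite !orb_false_r.
  apply Nat.eqb_neq; intros ->; contradiction.
Qed.

Lemma prv_imp_prenex qs A B G : qf A -> qf B -> NoDup (map snd qs) ->
  Forall (closed_for (map snd qs)) G ->
  (forall G', incl G G' -> prv G' (FImp A B)) ->
  prv G (FImp (prenex qs A) (prenex qs B)).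
Proof.
  intros HA HB; revert G; induction qs as [|[q y] qs IH]; intros G Hnd HG H; simpl in Hnd.
  - apply H, incl_refl.
  - inversion Hnd as [|? ? Hy Hnd']; subst.
    assert (HAcl : closed_for (y :: map snd qs) (quantify q y (prenex qs A)))
      by (destruct q; [apply closed_for_all | apply closed_for_ex];
          intros z Hz; apply freeb_prenex, Hz).
    assert (HGcl : Forall (closed_for (map snd qs)) G)
      by (eapply Forall_impl; [apply closed_for_cons_inv|exact HG]).
    assert (Hsub : forall C, qf C -> substitutable (TVar y) y (prenex qs C)).
    { intros C HC; apply substitutable_prenex; [exact HC|]. intros z Hz; simpl.
      apply Nat.eqb_neq; intros ->; contradiction. }
    destruct q; simpl; apply prv_impI.
    + apply prv_allI; [intros C HC; eapply closed_ctx_freeb;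
        [constructor; [exact HAcl|exact HG] | left; reflexivity | exact HC]|].
      apply (prv_impE _ (prenex qs A)).
      * apply IH; [exact Hnd' | constructor; [apply (closed_for_cons_inv y), HAcl | exact HGcl] |].
        intros G' HG'; apply H; intros C HC; apply HG'; right; exact HC.
      * pose proof (prv_allE _ _ _ _ (Hsub A HA) (prv_hd G (FAll y (prenex qs A)))) as Hinst.
        rewrite subst_id in Hinst; exact Hinst.
    + apply (prv_exE _ y (prenex qs A)).
      * intros C HC; eapply closed_ctx_freeb;
          [constructor; [exact HAcl|exact HG] | left; reflexivity | exact HC].
      * simpl; rewrite Nat.eqb_refl; reflexivity.
      * apply prv_hd.
      * apply prv_exI with (TVar y); [apply Hsub, HB|]; rewrite subst_id.
        apply (prv_impE _ (prenex qs A)); [|apply prv_hd].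
        apply IH; [exact Hnd' | |].
        -- repeat constructor; [intros z Hz; apply freeb_prenex, Hz
                               | apply (closed_for_cons_inv y), HAcl | exact HGcl].
        -- intros G' HG'; apply H; intros C HC; apply HG'; right; right; exact HC.
Qed.

Section QuantifierStep.

(* [P] is the body of a quantifier over [x], [g c] stands for the grounding of
   [P(c)], and [Hstep] is the induction hypothesis on the remaining prefix,
   whose variables are [zs]. *)
Variables (cs : list nat) (F0 : form) (x c0 : nat) (zs : list nat) (P : form)
  (g : nat -> form).

Definition admissible (G : list form) : Prop :=
  In (SPP cs F0) G /\ Forall (closed_for zs) G.

Hypothesis Hc0 : In c0 cs.
Hypothesis Hx : ~ In x zs.
Hypothesis HPx : substitutable (TVar x) x P.
Hypothesis HP : closed_for zs P.
Hypothesis Hg : forall c, closed_for (x :: zs) (g c).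
Hypothesis Hstep : forall c G, In c cs -> admissible G ->
  prv G (FIff (g c) (subst x (TConst c) P)).

Lemma admissible_cons A G : closed_for zs A -> admissible G -> admissible (A :: G).
Proof. intros HA [HS HG]; split; [right; exact HS | constructor; assumption]. Qed.

Lemma admissible_neq_consts E G :
  Forall (fun B => exists d, B = neq_const x d) E -> admissible G -> admissible (E ++ G).
Proof.
  intros HE [HS HG]; split; [apply in_or_app; right; exact HS|].
  apply Forall_app; split; [apply (closed_for_neq_consts zs x E Hx HE) | exact HG].
Qed.

Lemma outside_of_admissible E G : (forall c, In c cs -> In (neq_const x c) E) ->
  admissible (E ++ G) -> outside cs F0 x (E ++ G).
Proof.
  intros Hall [HS _]; split; [exact HS | intros c Hc; apply in_or_app; left; apply Hall, Hc].
Qed.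

Lemma admissible_eq_const c G : admissible G -> admissible (FEq (TVar x) (TConst c) :: G).
Proof. apply admissible_cons, closed_for_eq_const, Hx. Qed.

Lemma closed_for_ground_list : Forall (closed_for (x :: zs)) (map g cs).
Proof.
  apply Forall_forall; intros A HA; apply in_map_iff in HA as [c [<- _]]; apply Hg.
Qed.

Lemma admissible_of_closed G :
  In (SPP cs F0) G -> Forall (closed_for (x :: zs)) G -> admissible G.
Proof.
  intros HS HG; split; [exact HS|].
  eapply Forall_impl; [apply closed_for_cons_inv | exact HG].
Qed.

Lemma prv_eq_const_subst_inv G c :
  prv G (FEq (TVar x) (TConst c)) -> prv G (subst x (TConst c) P) -> prv G P.
Proof.
  intros Heq HPc; rewrite <- (subst_id x P).
  exact (prv_eqsubst _ _ _ _ _ (substitutable_const _ _ _) HPx (prv_eq_sym _ _ _ Heq) HPc).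
Qed.

Lemma prv_eq_const_subst G c :
  prv G (FEq (TVar x) (TConst c)) -> prv G P -> prv G (subst x (TConst c) P).
Proof.
  intros Heq H; rewrite <- (subst_id x P) in H.
  exact (prv_eqsubst _ _ _ _ _ HPx (substitutable_const _ _ _) Heq H).
Qed.

Lemma prv_bigAnd_imp_all G :
  In (SPP cs F0) G -> Forall (closed_for (x :: zs)) G ->
  (forall G', outside cs F0 x G' -> Forall (closed_for zs) G' ->
     prv G' (FImp (subst x (TConst c0) P) P)) ->
  prv G (FImp (bigAnd (map g cs)) (FAll x P)).
Proof.
  intros HS HG Htransfer.
  set (Gs := bigAnd (map g cs)).
  assert (HGs : closed_for (x :: zs) Gs) by apply closed_for_bigAnd, closed_for_ground_list.
  assert (Hadm : admissible (Gs :: G)).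
  { apply admissible_cons; [apply (closed_for_cons_inv x), HGs|].
    apply admissible_of_closed; assumption. }
  assert (Hinst : forall c G', In c cs -> admissible G' -> In Gs G' ->
                   prv G' (subst x (TConst c) P)).
  { intros c G' Hc HG' HGs'.
    apply (prv_impE _ (g c)); [apply (prv_andE1 _ _ _ (Hstep c G' Hc HG'))|].
    apply (prv_bigAnd_elim _ (map g cs)); [apply in_map, Hc | apply prv_ax, HGs']. }
  apply prv_impI, prv_allI.
  { intros B HB; eapply closed_ctx_freeb; [constructor; [exact HGs | exact HG] | left | exact HB].
    reflexivity. }
  apply (prv_cases_const x P cs).
  - intros c E Hc HE.
    apply (prv_eq_const_subst_inv _ c); [apply prv_hd|].
    apply Hinst; [exact Hc | apply admissible_eq_const, admissible_neq_consts; assumption |].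
    right; apply in_or_app; right; left; reflexivity.
  - intros E HE Hall.
    assert (Hadm' := admissible_neq_consts E _ HE Hadm).
    apply (prv_impE _ (subst x (TConst c0) P)).
    + apply Htransfer; [apply outside_of_admissible | apply Hadm']; assumption.
    + apply Hinst; [exact Hc0 | exact Hadm' | apply in_or_app; right; left; reflexivity].
Qed.

Lemma prv_all_imp_bigAnd G :
  In (SPP cs F0) G -> Forall (closed_for (x :: zs)) G ->
  prv G (FImp (FAll x P) (bigAnd (map g cs))).
Proof.
  intros HS HG.
  assert (Hadm : admissible (FAll x P :: G)).
  { apply admissible_cons; [apply (closed_for_cons_inv x), closed_for_all, HP|].
    apply admissible_of_closed; assumption. }
  apply prv_impI, prv_bigAnd_intro; intros A HA; apply in_map_iff in HA as [c [<- Hc]].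
  apply (prv_impE _ (subst x (TConst c) P)); [apply (prv_andE2 _ _ _ (Hstep c _ Hc Hadm))|].
  apply prv_allE; [apply substitutable_const | apply prv_hd].
Qed.

Lemma prv_bigOr_imp_ex G :
  In (SPP cs F0) G -> Forall (closed_for (x :: zs)) G ->
  prv G (FImp (bigOr (map g cs)) (FEx x P)).
Proof.
  intros HS HG.
  assert (Hl : Forall (closed_for zs) (map g cs))
    by (eapply Forall_impl; [apply closed_for_cons_inv | apply closed_for_ground_list]).
  apply prv_impI, (prv_bigOr_elim _ (map g cs)); [apply prv_hd|].
  intros A E HA HE; apply in_map_iff in HA as [c [<- Hc]].
  assert (Hadm : admissible (g c :: E ++ bigOr (map g cs) :: G)).
  { apply admissible_cons; [apply (closed_for_cons_inv x), Hg|].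
    split; [apply in_or_app; right; right; exact HS|].
    apply Forall_app; split.
    - eapply Forall_impl; [|exact HE]; intros B; apply closed_for_sub_disjunction, Hl.
    - constructor; [apply closed_for_bigOr, Hl|].
      eapply Forall_impl; [apply closed_for_cons_inv | exact HG]. }
  apply prv_exI with (TConst c); [apply substitutable_const|].
  apply (prv_impE _ (g c)); [apply (prv_andE1 _ _ _ (Hstep c _ Hc Hadm)) | apply prv_hd].
Qed.

Lemma prv_ex_imp_bigOr G :
  In (SPP cs F0) G -> Forall (closed_for (x :: zs)) G ->
  (forall G', outside cs F0 x G' -> Forall (closed_for zs) G' ->
     prv G' (FImp P (subst x (TConst c0) P))) ->
  prv G (FImp (FEx x P) (bigOr (map g cs))).
Proof.
  intros HS HG Htransfer.
  set (Gs := bigOr (map g cs)).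
  assert (HGs : closed_for (x :: zs) Gs) by apply closed_for_bigOr, closed_for_ground_list.
  assert (Hadm : admissible (P :: FEx x P :: G)).
  { apply admissible_cons; [exact HP|].
    apply admissible_cons; [apply (closed_for_cons_inv x), closed_for_ex, HP|].
    apply admissible_of_closed; assumption. }
  assert (Hground : forall c G', In c cs -> admissible G' ->
            prv G' (subst x (TConst c) P) -> prv G' Gs).
  { intros c G' Hc HG' HPc; apply (prv_bigOr_intro _ _ (g c)); [apply in_map, Hc|].
    apply (prv_impE _ _ _ (prv_andE2 _ _ _ (Hstep c G' Hc HG')) HPc). }
  apply prv_impI, (prv_exE _ x P); [| apply HGs; left; reflexivity | apply prv_hd |].
  { intros B HB; eapply closed_ctx_freeb; [constructor; [apply closed_for_ex, HP | exact HG]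
                                          | left; reflexivity | exact HB]. }
  apply (prv_cases_const x Gs cs).
  - intros c E Hc HE.
    apply (Hground c); [exact Hc | apply admissible_eq_const, admissible_neq_consts; assumption|].
    apply prv_eq_const_subst; [apply prv_hd|].
    apply prv_ax; right; apply in_or_app; right; left; reflexivity.
  - intros E HE Hall.
    assert (Hadm' := admissible_neq_consts E _ HE Hadm).
    apply (Hground c0 _ Hc0 Hadm'), (prv_impE _ P).
    + apply Htransfer; [apply outside_of_admissible | apply Hadm']; assumption.
    + apply prv_ax, in_or_app; right; left; reflexivity.
Qed.

End QuantifierStep.

Definition safe_matrix (cs : list nat) (F0 : form) (qs : list (quant * nat)) (M : form) :=
  qf M /\ incl (consts M) cs /\ incl (preds M) (preds F0) /\
  forall q x, In (q, x) qs -> wcov q x true M.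

Lemma safe_matrix_subst cs F0 q x qs M c :
  ~ In x (map snd qs) -> In c cs -> safe_matrix cs F0 ((q, x) :: qs) M ->
  safe_matrix cs F0 qs (subst x (TConst c) M).
Proof.
  intros Hx Hc [HM [Hcs [Hp Hw]]]; split; [|split; [|split]].
  - apply qf_subst, HM.
  - intros a Ha; apply consts_subst_const in Ha as [<-|Ha]; auto.
  - rewrite preds_subst by exact HM; exact Hp.
  - intros q' x' Hq'; apply wcov_subst_const; [|apply (Hw q'); right; exact Hq'].
    intros ->; apply Hx, (in_map snd _ (q', x) Hq').
Qed.

Lemma prv_prenex_transfer cs F0 q x qs M c0 G :
  NoDup (x :: map snd qs) -> safe_matrix cs F0 ((q, x) :: qs) M ->
  outside cs F0 x G -> Forall (closed_for (map snd qs)) G ->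
  prv G (imp_dir (dir q true) (subst x (TConst c0) (prenex qs M)) (prenex qs M)).
Proof.
  intros Hnd [HM [Hc [Hp Hw]]] Hout HG; inversion Hnd as [|? ? Hx Hnd']; subst.
  rewrite subst_prenex by exact Hx.
  assert (Hwx : wcov q x true M) by (apply Hw; left; reflexivity).
  destruct q; apply prv_imp_prenex; auto using qf_subst; intros G' HG'.
  - apply (prv_wcov_transfer cs F0 QAll x true); eauto using outside_incl.
  - apply (prv_wcov_transfer cs F0 QEx x true); eauto using outside_incl.
Qed.

Lemma prv_ground_iff_prenex cs F0 qs M G :
  cs <> [] -> NoDup (map snd qs) -> safe_matrix cs F0 qs M ->
  In (SPP cs F0) G -> Forall (closed_for (map snd qs)) G ->
  prv G (FIff (ground cs qs M) (prenex qs M)).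
Proof.
  intros Hcs; revert M G; induction qs as [|[q x] qs IH]; intros M G Hnd HM HS HG.
  { apply prv_iff_refl. }
  simpl in Hnd; inversion Hnd as [|? ? Hx Hnd']; subst.
  assert (Hc0 : exists c0, In c0 cs)
    by (destruct cs as [|c0]; [congruence | exists c0; left; reflexivity]).
  destruct Hc0 as [c0 Hc0].
  assert (HqM : qf M) by apply HM.
  set (P := prenex qs M); set (g := fun c => ground cs qs (subst x (TConst c) M)).
  assert (Hstep : forall c G', In c cs -> admissible cs F0 (map snd qs) G' ->
                    prv G' (FIff (g c) (subst x (TConst c) P))).
  { intros c G' Hc [HS' HG']; unfold g, P; rewrite subst_prenex by exact Hx.
    apply IH; [exact Hnd' | exact (safe_matrix_subst _ _ q _ _ _ _ Hx Hc HM) | exact HS' |].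
    exact HG'. }
  assert (Htransfer : forall G', outside cs F0 x G' -> Forall (closed_for (map snd qs)) G' ->
            prv G' (imp_dir (dir q true) (subst x (TConst c0) P) P))
    by (intros; apply (prv_prenex_transfer cs F0); assumption).
  assert (HP : closed_for (map snd qs) P) by (intros z Hz; apply freeb_prenex, Hz).
  assert (Hg : forall c, closed_for (x :: map snd qs) (g c)).
  { intros c z [<-|Hz]; apply freeb_ground; [left; rewrite freeb_subst_const, Nat.eqb_refl|];
      auto. }
  assert (HPx : substitutable (TVar x) x P).
  { apply substitutable_prenex; [exact HqM|]; intros z Hz; simpl; apply Nat.eqb_neq.
    intros ->; contradiction. }
  destruct q; apply prv_andI.
  - apply (prv_bigAnd_imp_all cs F0 x c0 (map snd qs) P g); auto.
  - apply (prv_all_imp_bigAnd cs F0 x (map snd qs) P g); auto.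
  - apply (prv_bigOr_imp_ex cs F0 x (map snd qs) P g); auto.
  - apply (prv_ex_imp_bigOr cs F0 x c0 (map snd qs) P g); auto.
Qed.

Theorem proposition2 (qs : list (quant * nat)) (M : form) (cs : list nat) :
  safe qs M ->
  cs <> [] -> NoDup cs ->
  (forall c, In c (consts (prenex qs M)) -> In c cs) ->
  prv [SPP cs (prenex qs M)] (FIff (ground cs qs M) (prenex qs M)).
Proof.
  intros [[HM [Hnd _]] [_ Hw]] Hcs _ Hc.
  apply (prv_ground_iff_prenex cs (prenex qs M)); auto.
  - repeat split; auto.
    + intros c Hc'; apply Hc; rewrite consts_prenex; exact Hc'.
    + rewrite preds_prenex; apply incl_refl.
  - left; reflexivity.
  - constructor; [intros z _; apply freeb_SPP | constructor].
Qed.
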